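(* Let $A$ be a C$^*$-algebra with cancellation. (1) Let $p$ be a projection in $A$ and let $\{g_n\}_{n=1}^N$ be an increasing sequence in $K_0(A)^+$ with $g_N=[p]_0$. Then there exists an increasing sequence $\{p_n\}_{n=1}^N$ of projections in $A$ such that $[p_n]_0=g_n$ for $1\leq n\leq N$ and $p_N=p$. (2) Let $\{p_n\}_{n=1}^N$ be an increasing sequence of projections in $A$ and $\{g_m\}_{m=1}^M$ an increasing sequence in $K_0(A)^+$ such that there is an increasing sequence $\{m_n\}_{n=1}^N$ of indices with $g_{m_n}=[p_n]_0$ for all $1\leq n\leq N$ and $m_N=M$. Then there exists an increasing sequence $\{q_m\}_{m=1}^M$ of projections in $A$ such that $[q_m]_0=g_m$ for all $1\leq m\leq M$ and $p_n=q_{m_n}$ for all $1\leq n\leq N$.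
   Context: For a C$^*$-algebra $A$, $K_0(A)$ is the usual $K_0$-group with positive cone $K_0(A)^+=\{[p]_0 : p \text{ a projection in } M_n(A),\ n\geq1\}$, and $g\leq h$ means $h-g\in K_0(A)^+$. For projections, $p\leq q$ means $pq=qp=p$; increasing sequences are taken with respect to these orders. $A$ has cancellation if for all projections $p,q$ in $\bigcup_{n\geq1}M_n(A)$, $[p]_0=[q]_0$ if and only if $p$ and $q$ are Murray--von Neumann equivalent. *)

From HB Require Import structures.
From mathcomp Require Import all_boot all_order all_algebra.
From mathcomp Require Import reals complex.
Set Implicit Arguments. Unset Strict Implicit. Unset Printing Implicit Defensive.
Import Order.TTheory GRing.Theory Num.Theory.
Local Open Scope ring_scope.
Local Open Scope complex_scope.

Record CstarAlg (R : realType) : Type := {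
  ca_car :> lmodType R[i];
  ca_mul : ca_car -> ca_car -> ca_car;
  ca_star : ca_car -> ca_car;
  ca_norm : ca_car -> R;
  ca_mulA : forall x y z, ca_mul x (ca_mul y z) = ca_mul (ca_mul x y) z;
  ca_mulDl : forall x y z, ca_mul (x + y) z = ca_mul x z + ca_mul y z;
  ca_mulDr : forall x y z, ca_mul x (y + z) = ca_mul x y + ca_mul x z;
  ca_mulZl : forall (c : R[i]) x y, ca_mul (c *: x) y = c *: ca_mul x y;
  ca_mulZr : forall (c : R[i]) x y, ca_mul x (c *: y) = c *: ca_mul x y;
  ca_starK : forall x, ca_star (ca_star x) = x;
  ca_starD : forall x y, ca_star (x + y) = ca_star x + ca_star y;
  ca_starZ : forall (c : R[i]) x, ca_star (c *: x) = c^* *: ca_star x;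
  ca_starM : forall x y, ca_star (ca_mul x y) = ca_mul (ca_star y) (ca_star x);
  ca_norm_eq0 : forall x, ca_norm x = 0 -> x = 0;
  ca_normD : forall x y, ca_norm (x + y) <= ca_norm x + ca_norm y;
  ca_normZ : forall (c : R[i]) x, (ca_norm (c *: x))%:C = `|c| * (ca_norm x)%:C;
  ca_normM : forall x y, ca_norm (ca_mul x y) <= ca_norm x * ca_norm y;
  ca_Cstar : forall x, ca_norm (ca_mul (ca_star x) x) = ca_norm x ^+ 2;
  ca_complete : forall u : nat -> ca_car,
    (forall e : R, 0 < e -> exists N, forall m n, (N <= m)%N -> (N <= n)%N ->
        ca_norm (u m - u n) < e) ->
    exists l, forall e : R, 0 < e -> exists N, forall n, (N <= n)%N ->
        ca_norm (u n - l) < e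
}.

Definition ca_sort (R : realType) (A : CstarAlg R) : Type :=
  GRing.Lmodule.sort (ca_car A).
Coercion ca_sort : CstarAlg >-> Sortclass.

Section Defs.
Variables (R : realType) (A : CstarAlg R).
Local Notation C := R[i].
Local Notation mulA := (@ca_mul R A).
Local Notation starA := (@ca_star R A).

Definition is_proj (p : A) : Prop := mulA p p = p /\ starA p = p.
Definition proj_le (p q : A) : Prop := mulA p q = p /\ mulA q p = p.

(* The unitization A~ = A (+) C, as a *-algebra (only the algebraic      *)
(* structure is needed to define Murray--von Neumann equivalence).      *)
Definition uT : Type := (A * C)%type.
Definition uzero : uT := (0, 0).
Definition uadd (x y : uT) : uT := (x.1 + y.1, x.2 + y.2).
Definition umul (x y : uT) : uT :=
  (mulA x.1 y.1 + x.2 *: y.1 + y.2 *: x.1, x.2 * y.2).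
Definition ustar (x : uT) : uT := (starA x.1, x.2^*).
Definition uone : uT := (0, 1).
Definition inA (x : uT) : Prop := x.2 = 0.
Definition emb (a : A) : uT := (a, 0).

Definition umat (m n : nat) : Type := 'I_m -> 'I_n -> uT.
Definition umatmul (m n k : nat) (x : umat m n) (y : umat n k) : umat m k :=
  fun i j => \big[uadd/uzero]_(l < n) umul (x i l) (y l j).
Definition uadj (m n : nat) (x : umat m n) : umat n m :=
  fun i j => ustar (x j i).
Definition umat_inA (m n : nat) (x : umat m n) : Prop :=
  forall i j, inA (x i j).
Definition uid (n : nat) : umat n n :=
  fun i j => if i == j then uone else uzero.
Definition udiag (m n : nat) (x : umat m m) (y : umat n n) : umat (m + n) (m + n) :=
  fun i j => match split i, split j with
             | inl i', inl j' => x i' j'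
             | inr i', inr j' => y i' j'
             | _, _ => uzero
             end.
Definition umat_proj (n : nat) (p : umat n n) : Prop :=
  umatmul p p = p /\ uadj p = p.

Definition mvn_u (m n : nat) (p : umat m m) (q : umat n n) : Prop :=
  exists v : umat n m, umatmul (uadj v) v = p /\ umatmul v (uadj v) = q.
Definition mvn_A (m n : nat) (p : umat m m) (q : umat n n) : Prop :=
  exists v : umat n m, umat_inA v /\
    umatmul (uadj v) v = p /\ umatmul v (uadj v) = q.

(* Projections in M_n(A), n >= 1: a representative of an element of K_0(A)^+ *)
Record projA : Type := ProjA {
  pdim : nat;
  pmat : umat pdim pdim;
  pdim_gt0 : (0 < pdim)%N;
  pmat_inA : umat_inA pmat;
  pmat_proj : umat_proj pmat
}.
Arguments pmat : clear implicits.

(* [p]_0 = [q]_0 in K_0(A) (a subgroup of K_0(A~)), for p in M_m(A),   *)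
(* q in M_n(A): standard picture, p (+) 1_k ~ q (+) 1_k in P_oo(A~).    *)
Definition K0eq_raw (m n : nat) (p : umat m m) (q : umat n n) : Prop :=
  exists k : nat, mvn_u (udiag p (@uid k)) (udiag q (@uid k)).
Definition K0eq (p q : projA) : Prop := K0eq_raw (pmat p) (pmat q).

(* g <= h in K_0(A), for g, h in K_0(A)^+: h - g in K_0(A)^+, i.e.      *)
(* h = g + [r]_0 = [g (+) r]_0 for some projection r over A.            *)
Definition K0le (g h : projA) : Prop :=
  exists r : projA, K0eq_raw (udiag (pmat g) (pmat r)) (pmat h).

Definition mat1 (a : A) : umat 1 1 := fun _ _ => emb a.
Definition K0eqA (g : projA) (p : A) : Prop := K0eq_raw (pmat g) (mat1 p).

Definition has_cancellation : Prop :=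
  forall p q : projA, K0eq p q <-> mvn_A (pmat p) (pmat q).

End Defs.

From HB Require Import structures.
From mathcomp Require Import all_boot all_order all_algebra.
From mathcomp Require Import reals complex zify.
From Stdlib Require Import FunctionalExtensionality.
Set Implicit Arguments. Unset Strict Implicit. Unset Printing Implicit Defensive.
Import Order.TTheory GRing.Theory Num.Theory.
Local Open Scope ring_scope.

(* The core is an interpolation property: if a <= b are projections in A and
   [a]_0 <= h <= [b]_0 in K_0(A), then h = [c]_0 for a projection a <= c <= b.
   Write h = [a]_0 + [s]_0 and [b]_0 = h + [t]_0, so that a (+) s (+) t is
   equivalent to b.  Transporting the summand a along this equivalence splits
   b = a' + b' with a' ~ a and b' ~ s (+) t.  Cancellation turns a' ~ a into
   b - a' ~ b - a, hence s (+) t ~ b - a, and transporting s splits off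
   s' <= b - a with s' ~ s; then c = a + s' works.
   Part (1) follows by interpolating g_(N-1), g_(N-2), ... downwards from p,
   and part (2) by doing so in every gap between two consecutive p_n. *)

(** * The unitization and matrices over it *)

Section Unitization.
Variables (R : realType) (A : CstarAlg R).
Local Notation C := R[i].
Local Notation mulA := (@ca_mul R A).
Local Notation starA := (@ca_star R A).
Local Notation U := (uT A).

Lemma ca_mul0r (x : A) : mulA 0 x = 0.
Proof. by apply: (addrI (mulA 0 x)); rewrite -ca_mulDl !addr0. Qed.

Lemma ca_mulr0 (x : A) : mulA x 0 = 0.
Proof. by apply: (addrI (mulA x 0)); rewrite -ca_mulDr !addr0. Qed.

Lemma ca_star0 : starA 0 = 0.
Proof. by apply: (addrI (starA 0)); rewrite -ca_starD !addr0. Qed.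

Lemma ca_starN (x : A) : starA (- x) = - starA x.
Proof. by apply: (addrI (starA x)); rewrite -ca_starD !subrr ca_star0. Qed.

Lemma is_proj0 : is_proj (0 : A).
Proof. by split; [exact: ca_mul0r | exact: ca_star0]. Qed.

Lemma proj_le0 (p : A) : proj_le 0 p.
Proof. by split; [exact: ca_mul0r | exact: ca_mulr0]. Qed.

Lemma umulA : associative (@umul R A).
Proof.
move=> [a al] [b be] [c ga]; rewrite /umul /=; congr (_, _); last by rewrite mulrA.
rewrite !ca_mulDr !ca_mulZr !ca_mulDl !ca_mulZl !ca_mulA !scalerDr !scalerA.
rewrite [ga * al]mulrC [ga * be]mulrC -!addrA; congr (_ + _).
rewrite [RHS]addrCA; congr (_ + _).
by rewrite (addrCA ((al * be) *: c) (ga *: _)) [RHS]addrCA.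
Qed.

Lemma umul1 : left_id (uone A) (@umul R A).
Proof. by move=> [b be]; rewrite /umul /= ca_mul0r scale1r scaler0 add0r addr0 mul1r. Qed.

Lemma umulr1 : right_id (uone A) (@umul R A).
Proof. by move=> [b be]; rewrite /umul /= ca_mulr0 scale1r scaler0 !add0r mulr1. Qed.

Lemma pairD (a b : A) (al be : C) : ((a, al) : U) + (b, be) = (a + b, al + be).
Proof. by []. Qed.

Lemma umulDl : left_distributive (@umul R A) +%R.
Proof.
move=> [a al] [b be] [c ga]; rewrite /umul /= !pairD /=; congr (_, _); last exact: mulrDl.
rewrite ca_mulDl scalerDl scalerDr -!addrA; congr (_ + _).
rewrite addrCA; congr (_ + _); rewrite [RHS]addrCA; congr (_ + _); exact: addrCA.
Qed.

Lemma umulDr : right_distributive (@umul R A) +%R.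
Proof.
move=> [a al] [b be] [c ga]; rewrite /umul /= !pairD /=; congr (_, _); last exact: mulrDr.
rewrite ca_mulDr scalerDl scalerDr -!addrA; congr (_ + _).
rewrite addrCA; congr (_ + _); rewrite [RHS]addrCA; congr (_ + _); exact: addrCA.
Qed.

HB.instance Definition _ := GRing.Zmodule.on U.
HB.instance Definition _ :=
  GRing.Zmodule_isPzRing.Build U umulA umul1 umulr1 umulDl umulDr.

Local Notation ustar := (@ustar R A).

Lemma ustarK (x : U) : ustar (ustar x) = x.
Proof. by case: x => [a al]; rewrite /ustar /= ca_starK conjcK. Qed.

Lemma ustar1 : ustar 1 = 1.
Proof. by congr (_, _); [exact: ca_star0 | exact: conjc1]. Qed.

Lemma ustarM (x y : U) : ustar (x * y) = ustar y * ustar x.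
Proof.
case: x y => [a al] [b be]; rewrite /ustar /= /umul /=.
rewrite !ca_starD !ca_starZ ca_starM rmorphM; congr (_, _); last exact: mulrC.
by rewrite -addrA (addrC (_ *: starA b)) addrA.
Qed.

Lemma ustarB (x y : U) : ustar (x - y) = ustar x - ustar y.
Proof.
case: x y => [a al] [b be]; congr (_, _); last exact: rmorphB.
by rewrite /= ca_starD ca_starN.
Qed.

HB.instance Definition _ := GRing.isZmodMorphism.Build U U ustar ustarB.

End Unitization.

Section Matrices.
Variables (R : realType) (A : CstarAlg R).
Local Notation U := (uT A).
Local Notation ustar := (@ustar R A).

Definition adjmx m n (M : 'M[U]_(m, n)) : 'M[U]_(n, m) := map_mx ustar M^T.

Lemma adjmxE m n (M : 'M[U]_(m, n)) i j : adjmx M i j = ustar (M j i).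
Proof. by rewrite !mxE. Qed.

Lemma adjmxK m n : cancel (@adjmx m n) (@adjmx n m).
Proof. by move=> M; apply/matrixP=> i j; rewrite !adjmxE ustarK. Qed.

Lemma adjmxM m n p (M : 'M[U]_(m, n)) (N : 'M[U]_(n, p)) :
  adjmx (M *m N) = adjmx N *m adjmx M.
Proof.
apply/matrixP=> i j; rewrite adjmxE !mxE raddf_sum; apply: eq_bigr => l _.
by rewrite !adjmxE -ustarM.
Qed.

Lemma adjmx0 m n : adjmx (0 : 'M[U]_(m, n)) = 0.
Proof. by rewrite /adjmx trmx0 map_mx0. Qed.

Lemma adjmxD m n (M N : 'M[U]_(m, n)) : adjmx (M + N) = adjmx M + adjmx N.
Proof. by rewrite /adjmx linearD map_mxD. Qed.

Lemma adjmxB m n (M N : 'M[U]_(m, n)) : adjmx (M - N) = adjmx M - adjmx N.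
Proof. by rewrite /adjmx linearB map_mxB. Qed.

Lemma adjmx1 n : adjmx (1%:M : 'M[U]_n) = 1%:M.
Proof.
apply/matrixP=> i j; rewrite adjmxE !mxE eq_sym.
by case: (i == j); rewrite ?ustar1 ?raddf0.
Qed.

Lemma adjmx_row m n1 n2 (M1 : 'M[U]_(m, n1)) (M2 : 'M[U]_(m, n2)) :
  adjmx (row_mx M1 M2) = col_mx (adjmx M1) (adjmx M2).
Proof. by rewrite /adjmx tr_row_mx map_col_mx. Qed.

Lemma adjmx_col m1 m2 n (M1 : 'M[U]_(m1, n)) (M2 : 'M[U]_(m2, n)) :
  adjmx (col_mx M1 M2) = row_mx (adjmx M1) (adjmx M2).
Proof. by rewrite /adjmx tr_col_mx map_row_mx. Qed.

Lemma adjmx_block m1 m2 n1 n2 (Mul : 'M[U]_(m1, n1)) (Mur : 'M[U]_(m1, n2))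
    (Mdl : 'M[U]_(m2, n1)) (Mdr : 'M[U]_(m2, n2)) :
  adjmx (block_mx Mul Mur Mdl Mdr) =
  block_mx (adjmx Mul) (adjmx Mdl) (adjmx Mur) (adjmx Mdr).
Proof. by rewrite /adjmx tr_block_mx map_block_mx. Qed.

Definition overA m n (M : 'M[U]_(m, n)) : Prop := forall i j, (M i j).2 = 0.

Lemma overA_mulmxl m n p (M : 'M[U]_(m, n)) (N : 'M[U]_(n, p)) :
  overA M -> overA (M *m N).
Proof.
move=> MA i j; rewrite mxE (big_morph snd (fun _ _ => erefl) erefl) big1 // => l _.
by rewrite /= MA mul0r.
Qed.

Lemma overA_mulmxr m n p (M : 'M[U]_(m, n)) (N : 'M[U]_(n, p)) :
  overA N -> overA (M *m N).
Proof.
move=> NA i j; rewrite mxE (big_morph snd (fun _ _ => erefl) erefl) big1 // => l _.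
by rewrite /= NA mulr0.
Qed.

Lemma overA_adjmx m n (M : 'M[U]_(m, n)) : overA M -> overA (adjmx M).
Proof. by move=> MA i j; rewrite adjmxE /= MA conjc0. Qed.

Lemma overA0 m n : overA (0 : 'M[U]_(m, n)).
Proof. by move=> i j; rewrite mxE. Qed.

Lemma overAD m n (M N : 'M[U]_(m, n)) : overA M -> overA N -> overA (M + N).
Proof. by move=> MA NA i j; rewrite !mxE /= MA NA addr0. Qed.

Lemma overAB m n (M N : 'M[U]_(m, n)) : overA M -> overA N -> overA (M - N).
Proof. by move=> MA NA i j; rewrite !mxE /= MA NA subr0. Qed.

Lemma overA_row m n1 n2 (M1 : 'M[U]_(m, n1)) (M2 : 'M[U]_(m, n2)) :
  overA M1 -> overA M2 -> overA (row_mx M1 M2).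
Proof.
by move=> M1A M2A i j; rewrite -(splitK j); case: (split j) => k; rewrite ?row_mxEl ?row_mxEr.
Qed.

Lemma overA_col m1 m2 n (M1 : 'M[U]_(m1, n)) (M2 : 'M[U]_(m2, n)) :
  overA M1 -> overA M2 -> overA (col_mx M1 M2).
Proof.
by move=> M1A M2A i j; rewrite -(splitK i); case: (split i) => k; rewrite ?col_mxEu ?col_mxEd.
Qed.

Lemma overA_block m1 m2 n1 n2 (Mul : 'M[U]_(m1, n1)) (Mur : 'M[U]_(m1, n2))
    (Mdl : 'M[U]_(m2, n1)) (Mdr : 'M[U]_(m2, n2)) :
  overA Mul -> overA Mur -> overA Mdl -> overA Mdr -> overA (block_mx Mul Mur Mdl Mdr).
Proof. by move=> *; apply: overA_col; apply: overA_row. Qed.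

Definition dsum m n (P : 'M[U]_m) (Q : 'M[U]_n) : 'M[U]_(m + n) := block_mx P 0 0 Q.

Lemma overA_dsum m n (P : 'M[U]_m) (Q : 'M[U]_n) : overA P -> overA Q -> overA (dsum P Q).
Proof. by move=> PA QA; apply: overA_block => //; apply: overA0. Qed.

Lemma dsum_mul m n (P P' : 'M[U]_m) (Q Q' : 'M[U]_n) :
  dsum P Q *m dsum P' Q' = dsum (P *m P') (Q *m Q').
Proof. by rewrite /dsum mulmx_block !mulmx0 !mul0mx !addr0 !add0r. Qed.

Lemma adjmx_dsum m n (P : 'M[U]_m) (Q : 'M[U]_n) :
  adjmx (dsum P Q) = dsum (adjmx P) (adjmx Q).
Proof. by rewrite /dsum adjmx_block !adjmx0. Qed.

End Matrices.

(** * Murray-von Neumann equivalence *)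

Ltac block_simpl := rewrite ?(mulmx_block, mul_row_col, mul_col_row, mul_row_block,
  mul_block_col, mul_col_mx, mul_mx_row, mulmx0, mul0mx, addr0, add0r, row_mx0, col_mx0,
  block_mx0, add_block_mx, add_row_mx, add_col_mx, adjmx_block, adjmx_row, adjmx_col, adjmx0).

Section Equivalence.
Variables (R : realType) (A : CstarAlg R).
Local Notation U := (uT A).

Definition is_projmx n (P : 'M[U]_n) : Prop := P *m P = P /\ adjmx P = P.

Definition projmx_le n (P Q : 'M[U]_n) : Prop := P *m Q = P /\ Q *m P = P.

Definition mvn_via m n (V : 'M[U]_(n, m)) (P : 'M[U]_m) (Q : 'M[U]_n) : Prop :=
  adjmx V *m V = P /\ V *m adjmx V = Q.

Definition mvn m n (P : 'M[U]_m) (Q : 'M[U]_n) : Prop := exists V, mvn_via V P Q.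

Definition mvnA m n (P : 'M[U]_m) (Q : 'M[U]_n) : Prop :=
  exists2 V, overA V & mvn_via V P Q.

Lemma is_projmx0 n : is_projmx (0 : 'M[U]_n).
Proof. by rewrite /is_projmx mul0mx adjmx0. Qed.

Lemma is_projmx1 n : is_projmx (1%:M : 'M[U]_n).
Proof. by rewrite /is_projmx mul1mx adjmx1. Qed.

Lemma is_projmx_dsum m n (P : 'M[U]_m) (Q : 'M[U]_n) :
  is_projmx P -> is_projmx Q -> is_projmx (dsum P Q).
Proof. by move=> [PP PA] [QQ QA]; rewrite /is_projmx dsum_mul adjmx_dsum PP PA QQ QA. Qed.

Lemma is_projmxB n (P Q : 'M[U]_n) :
  is_projmx P -> is_projmx Q -> projmx_le P Q -> is_projmx (Q - P).
Proof.
move=> [PP PA] [QQ QA] [PQ QP]; split; last by rewrite adjmxB PA QA.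
by rewrite mulmxBl !mulmxBr PP PQ QP QQ subrr subr0.
Qed.

Lemma mvn_via_refl n (P : 'M[U]_n) : is_projmx P -> mvn_via P P P.
Proof. by move=> [PP PA]; rewrite /mvn_via PA PP. Qed.

Lemma mvn_via_adj m n (V : 'M[U]_(n, m)) P Q : mvn_via V P Q -> mvn_via (adjmx V) Q P.
Proof. by move=> [VP VQ]; rewrite /mvn_via adjmxK. Qed.

Lemma mvn_via_mul m n k (V : 'M[U]_(n, m)) (W : 'M[U]_(k, n)) P Q S :
  P *m P = P -> S *m S = S -> mvn_via V P Q -> mvn_via W Q S -> mvn_via (W *m V) P S.
Proof.
move=> PP SS [VP VQ] [WQ WS].
have VQV : adjmx V *m Q *m V = P by rewrite -VQ !mulmxA VP -mulmxA VP.
have WQW : W *m Q *m adjmx W = S by rewrite -WQ !mulmxA WS -mulmxA WS.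
rewrite /mvn_via adjmxM !mulmxA -(mulmxA _ (adjmx W) W) -(mulmxA _ V (adjmx V)).
by rewrite WQ VQ VQV WQW.
Qed.

Lemma mvn_via_dsum m n m' n' (V : 'M[U]_(m', m)) (W : 'M[U]_(n', n)) P Q P' Q' :
  mvn_via V P P' -> mvn_via W Q Q' -> mvn_via (block_mx V 0 0 W) (dsum P Q) (dsum P' Q').
Proof.
move=> [VP VP'] [WQ WQ']; rewrite /mvn_via adjmx_block !adjmx0 !mulmx_block.
by rewrite !mulmx0 !mul0mx !addr0 !add0r VP VP' WQ WQ'.
Qed.

Lemma mvn_via_compress m n (V : 'M[U]_(n, m)) P Q :
  is_projmx P -> is_projmx Q -> mvn_via V P Q -> mvn_via (Q *m V *m P) P Q.
Proof.
move=> [PP PA] [QQ QA] [VP VQ].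
have VQV : adjmx V *m Q *m V = P by rewrite -VQ !mulmxA VP -mulmxA VP.
have VPV : V *m P *m adjmx V = Q by rewrite -VP !mulmxA VQ -mulmxA VQ.
rewrite /mvn_via !adjmxM PA QA; split.
  have -> : P *m (adjmx V *m Q) *m (Q *m V *m P) = P *m (adjmx V *m (Q *m Q) *m V) *m P.
    by rewrite !mulmxA.
  by rewrite QQ VQV !PP.
have -> : Q *m V *m P *m (P *m (adjmx V *m Q)) = Q *m (V *m (P *m P) *m adjmx V) *m Q.
  by rewrite !mulmxA.
by rewrite PP VPV !QQ.
Qed.

Lemma mvnA_mvn m n (P : 'M[U]_m) (Q : 'M[U]_n) : mvnA P Q -> mvn P Q.
Proof. by case=> V _ VPQ; exists V. Qed.

Lemma mvn_refl n (P : 'M[U]_n) : is_projmx P -> mvn P P.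
Proof. by move=> PP; exists P; apply: mvn_via_refl. Qed.

Lemma mvn_sym m n (P : 'M[U]_m) (Q : 'M[U]_n) : mvn P Q -> mvn Q P.
Proof. by case=> V VPQ; exists (adjmx V); apply: mvn_via_adj. Qed.

Lemma mvn_trans m n k (P : 'M[U]_m) (Q : 'M[U]_n) (S : 'M[U]_k) :
  is_projmx P -> is_projmx S -> mvn P Q -> mvn Q S -> mvn P S.
Proof.
by move=> [PP _] [SS _] [V VPQ] [W WQS]; exists (W *m V); exact: (mvn_via_mul PP SS VPQ WQS).
Qed.

Lemma mvn_dsum m n m' n' (P : 'M[U]_m) (Q : 'M[U]_n) (P' : 'M[U]_m') (Q' : 'M[U]_n') :
  mvn P P' -> mvn Q Q' -> mvn (dsum P Q) (dsum P' Q').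
Proof. by move=> [V VP] [W WQ]; exists (block_mx V 0 0 W); apply: mvn_via_dsum. Qed.

Lemma mvnA_refl n (P : 'M[U]_n) : is_projmx P -> overA P -> mvnA P P.
Proof. by move=> PP PA; exists P => //; apply: mvn_via_refl. Qed.

Lemma mvnA_sym m n (P : 'M[U]_m) (Q : 'M[U]_n) : mvnA P Q -> mvnA Q P.
Proof.
by case=> V VA VPQ; exists (adjmx V); [apply: overA_adjmx | apply: mvn_via_adj].
Qed.

Lemma mvnA_trans m n k (P : 'M[U]_m) (Q : 'M[U]_n) (S : 'M[U]_k) :
  is_projmx P -> is_projmx S -> mvnA P Q -> mvnA Q S -> mvnA P S.
Proof.
move=> [PP _] [SS _] [V VA VPQ] [W WA WQS].
by exists (W *m V); [apply: overA_mulmxr | exact: (mvn_via_mul PP SS VPQ WQS)].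
Qed.

Lemma mvnA_dsum m n m' n' (P : 'M[U]_m) (Q : 'M[U]_n) (P' : 'M[U]_m') (Q' : 'M[U]_n') :
  mvnA P P' -> mvnA Q Q' -> mvnA (dsum P Q) (dsum P' Q').
Proof.
move=> [V VA VP] [W WA WQ].
exists (block_mx V 0 0 W); last exact: mvn_via_dsum.
by apply: overA_block => //; apply: overA0.
Qed.

Lemma mvn_via_add n (E F : 'M[U]_n) :
  is_projmx E -> is_projmx F -> E *m F = 0 -> mvn_via (row_mx E F) (dsum E F) (E + F).
Proof.
move=> [EE EA] [FF FA] EF.
have FE : F *m E = 0 by rewrite -EA -FA -adjmxM EF adjmx0.
by rewrite /mvn_via adjmx_row EA FA mul_col_row mul_row_col EE FF EF FE.
Qed.

Lemma mvn_via_0dsum k n (P : 'M[U]_n) :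
  is_projmx P -> mvn_via (row_mx (0 : 'M_(n, k)) P) (dsum 0 P) P.
Proof.
move=> [PP PA]; rewrite /mvn_via adjmx_row adjmx0 PA mul_col_row mul_row_col.
by rewrite !mul0mx mulmx0 PP add0r.
Qed.

Lemma mvn_via_dsum0 k n (P : 'M[U]_n) :
  is_projmx P -> mvn_via (row_mx P (0 : 'M_(n, k))) (dsum P 0) P.
Proof.
move=> [PP PA]; rewrite /mvn_via adjmx_row adjmx0 PA mul_col_row mul_row_col.
by rewrite !mul0mx mulmx0 PP addr0.
Qed.

Lemma mvnA_dsumA m1 m2 m3 (P1 : 'M[U]_m1) (P2 : 'M[U]_m2) (P3 : 'M[U]_m3) :
  is_projmx P1 -> is_projmx P2 -> is_projmx P3 -> overA P1 -> overA P2 -> overA P3 ->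
  mvnA (dsum P1 (dsum P2 P3)) (dsum (dsum P1 P2) P3).
Proof.
move=> [PP1 PA1] [PP2 PA2] [PP3 PA3] P1A P2A P3A.
exists (block_mx (col_mx P1 0) (block_mx 0 0 P2 0) 0 (row_mx 0 P3)).
  by apply: overA_block;
    do ?[exact: overA0 | apply: overA_col | apply: overA_row | apply: overA_block].
rewrite /mvn_via /dsum; block_simpl; rewrite PA1 PA2 PA3 PP1 PP2 PP3; split=> //.
by rewrite [block_mx P2 0 0 0]block_mxEh add_row_mx !add_col_mx !addr0 !add0r -block_mxEh.
Qed.

Lemma mvn_dsum1_compl m n (P : 'M[U]_m) (E : 'M[U]_n) : is_projmx P -> is_projmx E ->
  mvn (dsum P (1%:M : 'M_n)) (dsum (dsum P E) (1%:M - E)).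
Proof.
move=> [PP PA] [EE EA]; exists (col_mx (dsum P E) (row_mx 0 (1%:M - E))).
have E'E' : (1%:M - E) *m (1%:M - E) = 1%:M - E.
  by rewrite mulmxBl !mulmxBr !mul1mx mulmx1 EE subrr subr0.
have EE' : E *m (1%:M - E) = 0 by rewrite mulmxBr mulmx1 EE subrr.
have E'E : (1%:M - E) *m E = 0 by rewrite mulmxBl mul1mx EE subrr.
rewrite /mvn_via adjmx_col adjmx_row adjmx_dsum adjmxB adjmx1 PA EA adjmx0.
by rewrite /dsum; block_simpl; rewrite PP EE E'E' EE' E'E row_mx0 col_mx0 (addrC E) subrK.
Qed.

Lemma mvn_stable m n k (P : 'M[U]_m) (Q : 'M[U]_n) (E : 'M[U]_k) :
  is_projmx P -> is_projmx Q -> is_projmx E ->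
  mvn (dsum P E) (dsum Q E) -> mvn (dsum P (1%:M : 'M_k)) (dsum Q (1%:M : 'M_k)).
Proof.
move=> PP QP EP PEQE.
have E'P := is_projmxB EP (is_projmx1 k) (conj (mulmx1 E) (mul1mx E)).
have P1P := is_projmx_dsum PP (is_projmx1 k); have Q1P := is_projmx_dsum QP (is_projmx1 k).
apply: (mvn_trans P1P Q1P (mvn_dsum1_compl PP EP)).
apply: (mvn_trans (is_projmx_dsum (is_projmx_dsum PP EP) E'P) Q1P).
  exact: mvn_dsum PEQE (mvn_refl E'P).
exact/mvn_sym/mvn_dsum1_compl.
Qed.

End Equivalence.

Section K0Order.
Variables (R : realType) (A : CstarAlg R).
Local Notation U := (uT A).

Definition K0le_mx m n (P : 'M[U]_m) (Q : 'M[U]_n) : Prop :=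
  exists k (S : 'M[U]_k), [/\ is_projmx S, overA S & mvnA (dsum P S) Q].

Lemma K0le_mx_refl n (P : 'M[U]_n) : is_projmx P -> overA P -> K0le_mx P P.
Proof.
move=> PP PA; exists 1%N, 0; split; [exact: is_projmx0 | exact: overA0 |].
by exists (row_mx P 0); [apply: overA_row => //; apply: overA0 | apply: mvn_via_dsum0].
Qed.

Lemma K0le0_mx n (P : 'M[U]_n) : is_projmx P -> overA P -> K0le_mx (0 : 'M_1) P.
Proof.
move=> PP PA; exists n, P; split => //.
by exists (row_mx 0 P); [apply: overA_row => //; apply: overA0 | apply: mvn_via_0dsum].
Qed.

Lemma K0le_mx_trans m n k (P : 'M[U]_m) (Q : 'M[U]_n) (T : 'M[U]_k) :
  is_projmx P -> overA P -> is_projmx T -> K0le_mx P Q -> K0le_mx Q T -> K0le_mx P T.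
Proof.
move=> PP PA TP [k1 [S [SP SA PSQ]]] [k2 [S' [S'P S'A QS'T]]].
exists (k1 + k2)%N, (dsum S S'); split; [exact: is_projmx_dsum | exact: overA_dsum |].
have PSS'P := is_projmx_dsum PP (is_projmx_dsum SP S'P).
apply: (mvnA_trans PSS'P TP (mvnA_dsumA PP SP S'P PA SA S'A)).
apply: (mvnA_trans (is_projmx_dsum (is_projmx_dsum PP SP) S'P) TP _ QS'T).
exact: mvnA_dsum PSQ (mvnA_refl S'P S'A).
Qed.

Lemma K0le_mx_mvnAr m n k (P : 'M[U]_m) (Q : 'M[U]_n) (T : 'M[U]_k) :
  is_projmx P -> is_projmx T -> K0le_mx P Q -> mvnA Q T -> K0le_mx P T.
Proof.
move=> PP TP [k1 [S [SP SA PSQ]]] QT; exists k1, S; split => //.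
exact: mvnA_trans (is_projmx_dsum PP SP) TP PSQ QT.
Qed.

Lemma K0le_mx_mvnAl m n k (P : 'M[U]_m) (Q : 'M[U]_n) (T : 'M[U]_k) :
  is_projmx P -> is_projmx T -> mvnA P Q -> K0le_mx Q T -> K0le_mx P T.
Proof.
move=> PP TP PQ [k1 [S [SP SA QST]]]; exists k1, S; split => //.
apply: (mvnA_trans (is_projmx_dsum PP SP) TP _ QST).
exact: mvnA_dsum PQ (mvnA_refl SP SA).
Qed.

End K0Order.

Section Subprojections.
Variables (R : realType) (A : CstarAlg R).
Local Notation U := (uT A).

Lemma mvnA_dsum_sub n (P Q : 'M[U]_n) : is_projmx P -> is_projmx Q -> overA P -> overA Q ->
  projmx_le P Q -> mvnA (dsum (Q - P) P) Q.
Proof.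
move=> PP QP PA QA PQ; have [[PP2 _] [_ QP2]] := (PP, PQ).
exists (row_mx (Q - P) P); first by apply: overA_row => //; apply: overAB.
rewrite -{3}(subrK P Q); apply: (mvn_via_add (is_projmxB PP QP PQ) PP).
by rewrite mulmxBl QP2 PP2 subrr.
Qed.

Lemma projmx_le_add n (P Q S : 'M[U]_n) :
  is_projmx P -> is_projmx S -> projmx_le P Q -> projmx_le S (Q - P) ->
  [/\ P *m S = 0, is_projmx (P + S), projmx_le P (P + S) & projmx_le (P + S) Q].
Proof.
move=> [PP PA] [SS SA] [PQ QP] [SQP QPS].
have PS : P *m S = 0 by rewrite -QPS mulmxA mulmxBr PQ PP subrr mul0mx.
have SP : S *m P = 0 by rewrite -SA -PA -adjmxM PS adjmx0.
have SQ : S *m Q = S by apply/eqP; rewrite -subr_eq0 -{2}SQP mulmxBr SP subr0 subrr.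
have QS : Q *m S = S by apply/eqP; rewrite -subr_eq0 -{2}QPS mulmxBl PS subr0 subrr.
split=> //; last by split; rewrite ?mulmxDl ?mulmxDr ?PQ ?SQ ?QP ?QS.
  by split; rewrite ?mulmxDl ?mulmxDr ?PP ?PS ?SP ?SS ?addr0 ?add0r ?adjmxD ?PA ?SA.
by split; rewrite ?mulmxDl ?mulmxDr ?PP ?PS ?SP ?addr0 ?add0r.
Qed.

Lemma projmx_le_of_mul n (P Q : 'M[U]_n) :
  is_projmx P -> is_projmx Q -> Q *m P = P -> projmx_le P Q.
Proof.
move=> [_ PA] [_ QA] QP; split=> //.
by rewrite -[LHS]adjmxK adjmxM PA QA QP PA.
Qed.

Lemma mvn_via_projr m n (V : 'M[U]_(n, m)) P Q :
  mvn_via V P Q -> V *m P = V -> is_projmx Q.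
Proof.
move=> [VP VQ] VPV; rewrite -VQ; split; last by rewrite adjmxM adjmxK.
by rewrite mulmxA -(mulmxA V) VP VPV.
Qed.

(* Without the C*-norm, [V *m P = V] does not follow from [adjmx V *m V = P];
   compressing the witness between P and Q provides it. *)
Lemma mvnA_compress m n (P : 'M[U]_m) (Q : 'M[U]_n) : is_projmx P -> is_projmx Q ->
  mvnA P Q -> exists2 W, overA W & [/\ mvn_via W P Q, W *m P = W & Q *m W = W].
Proof.
move=> PP QP [V VA VPQ]; exists (Q *m V *m P).
  by apply: overA_mulmxl; apply: overA_mulmxr.
split; first exact: mvn_via_compress.
  by rewrite -mulmxA (proj1 PP).
by rewrite !mulmxA (proj1 QP).
Qed.

Lemma mvn_via_mulmxr m n k (W : 'M[U]_(n, m)) (J : 'M[U]_(m, k)) P Q :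
  mvn_via W P Q -> W *m P = W -> P *m J = J ->
  mvn_via (W *m J) (adjmx J *m J) ((W *m J) *m adjmx (W *m J)).
Proof. by move=> [WP _] WPW PJ; split=> //; rewrite adjmxM -mulmxA (mulmxA (adjmx W)) WP PJ. Qed.

Lemma mvnA_dsum_split m n k (X : 'M[U]_m) (Y : 'M[U]_n) (Z : 'M[U]_k) :
  is_projmx X -> is_projmx Y -> is_projmx Z -> mvnA (dsum X Y) Z ->
  exists2 X', [/\ is_projmx X', overA X' & projmx_le X' Z] & mvnA X X' /\ mvnA Y (Z - X').
Proof.
move=> XP YP ZP XYZ; have [[XX XA] [YY YA]] := (XP, YP).
have [W WA [WXYZ WD ZW]] := mvnA_compress (is_projmx_dsum XP YP) ZP XYZ.
pose Jx := col_mx X (0 : 'M_(n, m)); pose Jy := col_mx (0 : 'M_(m, n)) Y.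
have DJx : dsum X Y *m Jx = Jx by rewrite /dsum mul_block_col !mul0mx !mulmx0 !addr0 XX.
have DJy : dsum X Y *m Jy = Jy by rewrite /dsum mul_block_col !mul0mx !mulmx0 !add0r YY.
have JxJx : adjmx Jx *m Jx = X by rewrite adjmx_col adjmx0 XA mul_row_col mul0mx addr0 XX.
have JyJy : adjmx Jy *m Jy = Y by rewrite adjmx_col adjmx0 YA mul_row_col mul0mx add0r YY.
have JJ : Jx *m adjmx Jx + Jy *m adjmx Jy = dsum X Y.
  rewrite !adjmx_col !adjmx0 XA YA !mul_col_row !mul0mx !mulmx0 add_block_mx.
  by rewrite !addr0 !add0r XX YY.
have x_via := mvn_via_mulmxr WXYZ WD DJx; rewrite JxJx in x_via.
have y_via := mvn_via_mulmxr WXYZ WD DJy; rewrite JyJy in y_via.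
have WJ j (J : 'M[U]_(m + n, j)) :
    (W *m J) *m adjmx (W *m J) = W *m (J *m adjmx J) *m adjmx W.
  by rewrite adjmxM !mulmxA.
have X'P : is_projmx ((W *m Jx) *m adjmx (W *m Jx)).
  by apply: (mvn_via_projr x_via); rewrite -mulmxA mul_col_mx XX mul0mx.
exists ((W *m Jx) *m adjmx (W *m Jx)); split.
- exact: X'P.
- by apply: overA_mulmxl; apply: overA_mulmxl.
- by apply: projmx_le_of_mul => //; rewrite !mulmxA ZW.
- by exists (W *m Jx) => //; apply: overA_mulmxl.
exists (W *m Jy); first exact: overA_mulmxl.
rewrite (_ : Z - _ = W *m Jy *m adjmx (W *m Jy)) //.
by rewrite -(proj2 WXYZ) -{1}WD -JJ mulmxDr mulmxDl -!WJ addrC addKr.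
Qed.

End Subprojections.

Section UmatToMatrix.
Variables (R : realType) (A : CstarAlg R).
Local Notation U := (uT A).
Local Notation mulA := (@ca_mul R A).
Local Notation starA := (@ca_star R A).

Definition mx_of_umat m n (x : umat A m n) : 'M[U]_(m, n) := \matrix_(i, j) x i j.

Definition umat_of_mx m n (M : 'M[U]_(m, n)) : umat A m n := fun i j => M i j.

Lemma umat_of_mxK m n (M : 'M[U]_(m, n)) : mx_of_umat (umat_of_mx M) = M.
Proof. by apply/matrixP=> i j; rewrite mxE. Qed.

Lemma mx_of_umat_inj m n : injective (@mx_of_umat m n).
Proof.
move=> x y /matrixP xy; apply: functional_extensionality => i.
by apply: functional_extensionality => j; have := xy i j; rewrite !mxE.
Qed.

Lemma mx_of_umatM m n p (x : umat A m n) (y : umat A n p) :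
  mx_of_umat (umatmul x y) = mx_of_umat x *m mx_of_umat y.
Proof. by apply/matrixP=> i j; rewrite !mxE; apply: eq_bigr => l _; rewrite !mxE. Qed.

Lemma mx_of_umat_adj m n (x : umat A m n) : mx_of_umat (uadj x) = adjmx (mx_of_umat x).
Proof. by apply/matrixP=> i j; rewrite !mxE. Qed.

Lemma mx_of_umat_diag m n (x : umat A m m) (y : umat A n n) :
  mx_of_umat (udiag x y) = dsum (mx_of_umat x) (mx_of_umat y).
Proof.
apply/matrixP=> i j; rewrite /dsum mxE /udiag -(splitK i) -(splitK j).
by case: (split i) => i'; case: (split j) => j';
  rewrite /= ?(unsplitK (inl _)) ?(unsplitK (inr _))
    ?block_mxEul ?block_mxEur ?block_mxEdl ?block_mxEdr !mxE.
Qed.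

Lemma mx_of_umat_id k : mx_of_umat (@uid R A k) = 1%:M.
Proof. by apply/matrixP=> i j; rewrite !mxE /uid; case: (i == j). Qed.

Lemma overA_umat m n (x : umat A m n) : umat_inA x <-> overA (mx_of_umat x).
Proof. by split=> xA i j; move: (xA i j); rewrite ?mxE. Qed.

Lemma is_projmx_umat n (x : umat A n n) : umat_proj x <-> is_projmx (mx_of_umat x).
Proof.
rewrite /is_projmx -mx_of_umatM -mx_of_umat_adj.
by split=> [[-> ->] | [/mx_of_umat_inj xx /mx_of_umat_inj xA]].
Qed.

Lemma mvn_umat m n (x : umat A m m) (y : umat A n n) :
  mvn_u x y <-> mvn (mx_of_umat x) (mx_of_umat y).
Proof.
split=> [[V [VX VY]] | [V [VX VY]]].
  by exists (mx_of_umat V); rewrite /mvn_via -mx_of_umat_adj -!mx_of_umatM VX VY.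
exists (umat_of_mx V); split; apply: mx_of_umat_inj;
  by rewrite mx_of_umatM mx_of_umat_adj umat_of_mxK.
Qed.

Lemma mvnA_umat m n (x : umat A m m) (y : umat A n n) :
  mvn_A x y <-> mvnA (mx_of_umat x) (mx_of_umat y).
Proof.
split=> [[V [VA [VX VY]]] | [V VA [VX VY]]].
  exists (mx_of_umat V); first exact: (proj1 (overA_umat V) VA).
  by rewrite /mvn_via -mx_of_umat_adj -!mx_of_umatM VX VY.
exists (umat_of_mx V); split; first by apply/overA_umat; rewrite umat_of_mxK.
by split; apply: mx_of_umat_inj; rewrite mx_of_umatM mx_of_umat_adj umat_of_mxK.
Qed.

Definition amx (a : A) : 'M[U]_1 := (emb a)%:M.

Lemma mx_of_umat1 (a : A) : mx_of_umat (mat1 a) = amx a.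
Proof. by apply/matrixP=> i j; rewrite !mxE !ord1 eqxx mulr1n. Qed.

Lemma amxM (a b : A) : amx a *m amx b = amx (mulA a b).
Proof.
rewrite -scalar_mxM; congr (_%:M); rewrite /emb.
by congr (_, _); rewrite /= ?mulr0 // !scale0r !addr0.
Qed.

Lemma amx0 : amx 0 = 0.
Proof. by apply/matrixP=> i j; rewrite !mxE mulrb; case: (i == j). Qed.

Lemma adjmx_amx (a : A) : adjmx (amx a) = amx (starA a).
Proof.
apply/matrixP=> i j; rewrite adjmxE !mxE !ord1 eqxx !mulr1n.
by rewrite /emb; congr (_, _); exact: conjc0.
Qed.

Lemma overA_amx (a : A) : overA (amx a).
Proof. by move=> i j; rewrite !mxE !ord1 eqxx mulr1n. Qed.

Lemma amx_inj : injective amx.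
Proof. by move=> a b /matrixP /(_ ord0 ord0); rewrite !mxE /= !mulr1n => -[]. Qed.

Lemma overA_amxP (M : 'M[U]_1) : overA M -> M = amx (M ord0 ord0).1.
Proof.
move=> MA; apply/matrixP=> i j; rewrite !ord1 !mxE /= mulr1n /emb.
by case: (M ord0 ord0) (MA ord0 ord0) => x y /= ->.
Qed.

Lemma is_projmx_amx (a : A) : is_proj a <-> is_projmx (amx a).
Proof.
rewrite /is_projmx amxM adjmx_amx.
by split=> [[-> ->] | [/amx_inj aa /amx_inj aA]].
Qed.

Lemma projmx_le_amx (a b : A) : proj_le a b <-> projmx_le (amx a) (amx b).
Proof.
rewrite /projmx_le !amxM.
by split=> [[-> ->] | [/amx_inj ab /amx_inj ba]].
Qed.

Definition pmx (g : projA A) : 'M[U]_(pdim g) := mx_of_umat (@pmat R A g).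

Lemma is_projmx_pmx g : is_projmx (pmx g).
Proof. exact: (proj1 (is_projmx_umat _) (pmat_proj g)). Qed.

Lemma overA_pmx g : overA (pmx g).
Proof. exact: (proj1 (overA_umat _) (@pmat_inA R A g)). Qed.

Lemma K0le_mx_amx0 (g : projA A) : K0le_mx (amx 0) (pmx g).
Proof. by rewrite amx0; apply: K0le0_mx; [apply: is_projmx_pmx | apply: overA_pmx]. Qed.

End UmatToMatrix.

(** * Interpolation under cancellation *)

Section Cancellation.
Variables (R : realType) (A : CstarAlg R).
Local Notation U := (uT A).
Hypothesis canc : has_cancellation A.

(* Elements of [projA A] have positive size, hence the successor sizes. *)
Lemma mvnA_cancel m n k (P : 'M[U]_m.+1) (Q : 'M[U]_n.+1) :
  is_projmx P -> is_projmx Q -> overA P -> overA Q ->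
  mvn (dsum P (1%:M : 'M_k)) (dsum Q (1%:M : 'M_k)) -> mvnA P Q.
Proof.
move=> PP QP PA QA PQ.
have pA : umat_inA (umat_of_mx P) by apply/overA_umat; rewrite umat_of_mxK.
have qA : umat_inA (umat_of_mx Q) by apply/overA_umat; rewrite umat_of_mxK.
have pP : umat_proj (umat_of_mx P) by apply/is_projmx_umat; rewrite umat_of_mxK.
have qP : umat_proj (umat_of_mx Q) by apply/is_projmx_umat; rewrite umat_of_mxK.
have [+ _] := canc (ProjA (ltn0Sn m) pA pP) (ProjA (ltn0Sn n) qA qP).
rewrite /K0eq /= => /(_ _)/mvnA_umat; rewrite !umat_of_mxK; apply.
by exists k; apply/mvn_umat; rewrite !mx_of_umat_diag !umat_of_mxK mx_of_umat_id.
Qed.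

Lemma mvnA_compl n (P Q1 Q2 : 'M[U]_n.+1) :
  is_projmx P -> is_projmx Q1 -> is_projmx Q2 -> overA P -> overA Q1 -> overA Q2 ->
  projmx_le Q1 P -> projmx_le Q2 P -> mvnA Q1 Q2 -> mvnA (P - Q1) (P - Q2).
Proof.
move=> PP Q1P Q2P PA Q1A Q2A Q1le Q2le Q12.
have P1P := is_projmxB Q1P PP Q1le; have P2P := is_projmxB Q2P PP Q2le.
apply: (mvnA_cancel P1P P2P (overAB PA Q1A) (overAB PA Q2A)).
apply: (mvn_stable P1P P2P Q1P); apply: mvnA_mvn.
apply: (mvnA_trans (is_projmx_dsum P1P Q1P) (is_projmx_dsum P2P Q1P)
         (mvnA_dsum_sub Q1P PP Q1A PA Q1le)).
apply: (mvnA_trans PP (is_projmx_dsum P2P Q1P)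
         (mvnA_sym (mvnA_dsum_sub Q2P PP Q2A PA Q2le))).
exact: mvnA_dsum (mvnA_refl P2P (overAB PA Q2A)) (mvnA_sym Q12).
Qed.

Lemma projmx_interpolate n (P Q : 'M[U]_n.+1) k (H : 'M[U]_k) :
  is_projmx P -> is_projmx Q -> is_projmx H -> overA P -> overA Q ->
  projmx_le P Q -> K0le_mx P H -> K0le_mx H Q ->
  exists2 C, [/\ is_projmx C, overA C, projmx_le P C & projmx_le C Q] & mvnA H C.
Proof.
move=> PP QP HP PA QA PQ [k1 [S [SP SA PSH]]] [k2 [T [TP TA HTQ]]].
have PSTQ : mvnA (dsum P (dsum S T)) Q.
  have PS_P := is_projmx_dsum PP SP.
  apply: (mvnA_trans (is_projmx_dsum PP (is_projmx_dsum SP TP)) QP (mvnA_dsumA PP SP TP PA SA TA)).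
  exact: (mvnA_trans (is_projmx_dsum PS_P TP) QP (mvnA_dsum PSH (mvnA_refl TP TA)) HTQ).
have [P' [P'P P'A P'Q] [PP' STQP']] := mvnA_dsum_split PP (is_projmx_dsum SP TP) QP PSTQ.
have QPP := is_projmxB PP QP PQ.
have STQP : mvnA (dsum S T) (Q - P).
  apply: (mvnA_trans (is_projmx_dsum SP TP) QPP STQP').
  exact: mvnA_compl QP P'P PP QA P'A PA P'Q PQ (mvnA_sym PP').
have [S' [S'P S'A S'QP] [SS' _]] := mvnA_dsum_split SP TP QPP STQP.
have [PS' PS'P PPS' PS'Q] := projmx_le_add PP S'P PQ S'QP.
exists (P + S'); first by split=> //; apply: overAD.
apply: (mvnA_trans HP PS'P (mvnA_sym PSH)).
apply: (mvnA_trans (is_projmx_dsum PP SP) PS'P (mvnA_dsum (mvnA_refl PP PA) SS')).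
by exists (row_mx P S'); [apply: overA_row | apply: mvn_via_add].
Qed.

End Cancellation.

Section K0.
Variables (R : realType) (A : CstarAlg R).
Hypothesis canc : has_cancellation A.

Lemma K0le_mx_pmx (g h : projA A) : K0le g h -> K0le_mx (pmx g) (pmx h).
Proof.
case=> r gr; exists (pdim r), (pmx r); split; [exact: is_projmx_pmx | exact: overA_pmx |].
have grA : umat_inA (udiag (@pmat R A g) (@pmat R A r)).
  by apply/overA_umat; rewrite mx_of_umat_diag; apply: overA_dsum; apply: overA_pmx.
have grP : umat_proj (udiag (@pmat R A g) (@pmat R A r)).
  by apply/is_projmx_umat; rewrite mx_of_umat_diag; apply: is_projmx_dsum; apply: is_projmx_pmx.
have /mvnA_umat := proj1 (canc (ProjA (ltn_addr _ (pdim_gt0 g)) grA grP) h) gr.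
by rewrite mx_of_umat_diag.
Qed.

Lemma K0eqA_mvnA (g : projA A) (a : A) : is_proj a -> K0eqA g a <-> mvnA (pmx g) (amx a).
Proof.
move=> /is_projmx_amx aP.
have aA : umat_inA (mat1 a) by apply/overA_umat; rewrite mx_of_umat1; apply: overA_amx.
have aP' : umat_proj (mat1 a) by apply/is_projmx_umat; rewrite mx_of_umat1.
have := canc g (ProjA (ltn0Sn 0) aA aP'); rewrite /K0eq /K0eqA /= => ->.
by rewrite mvnA_umat mx_of_umat1.
Qed.

Lemma K0le_amx_pmx (h h' : projA A) (a : A) :
  is_proj a -> K0eqA h a -> K0le h h' -> K0le_mx (amx a) (pmx h').
Proof.
move=> aP ha hh'; have /mvnA_sym ah := proj1 (K0eqA_mvnA h aP) ha.
exact: K0le_mx_mvnAl (proj1 (is_projmx_amx a) aP) (is_projmx_pmx h') ah (K0le_mx_pmx hh').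
Qed.

Lemma K0le_pmx_amx (h h' : projA A) (b : A) :
  is_proj b -> K0le h h' -> K0eqA h' b -> K0le_mx (pmx h) (amx b).
Proof.
move=> bP hh' h'b; have h'b' := proj1 (K0eqA_mvnA h' bP) h'b.
exact: K0le_mx_mvnAr (is_projmx_pmx h) (proj1 (is_projmx_amx b) bP) (K0le_mx_pmx hh') h'b'.
Qed.

Lemma K0le_mx_chain (g : nat -> projA A) i j :
  (forall k, (i <= k < j)%N -> K0le (g k) (g k.+1)) -> (i <= j)%N ->
  K0le_mx (pmx (g i)) (pmx (g j)).
Proof.
move=> gle ij; pose r (x y : projA A) := K0le_mx (pmx x) (pmx y).
apply: (@homo_leq_in _ [pred k | i <= k <= j]%N g r); rewrite ?inE ?leqnn ?ij //.
- by move=> x; apply: K0le_mx_refl; [apply: is_projmx_pmx | apply: overA_pmx].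
- move=> y x z; apply: K0le_mx_trans;
    by [apply: is_projmx_pmx | apply: overA_pmx].
- move=> x y /andP[ix _] /andP[_ yj] k /andP[xk ky].
  by rewrite inE (leq_trans ix (ltnW xk)) (leq_trans (ltnW ky) yj).
- by move=> k /andP[ik _] /andP[_ kj]; apply: K0le_mx_pmx; apply: gle; rewrite ik kj.
Qed.

Lemma K0le_amx_chain (g : nat -> projA A) (a : A) i j :
  is_proj a -> K0le_mx (amx a) (pmx (g i)) ->
  (forall k, (i <= k < j)%N -> K0le (g k) (g k.+1)) -> (i <= j)%N ->
  K0le_mx (amx a) (pmx (g j)).
Proof.
move=> /is_projmx_amx aP ag gle ij.
apply: (K0le_mx_trans aP (overA_amx a) (is_projmx_pmx _) ag).
exact: K0le_mx_chain.
Qed.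

Lemma proj_interpolate (a b : A) (h : projA A) :
  is_proj a -> is_proj b -> proj_le a b ->
  K0le_mx (amx a) (pmx h) -> K0le_mx (pmx h) (amx b) ->
  exists c, [/\ is_proj c, proj_le a c, proj_le c b & K0eqA h c].
Proof.
move=> /is_projmx_amx aP /is_projmx_amx bP /projmx_le_amx ab ah hb.
have [C [CP CA aC Cb] hC] := projmx_interpolate canc aP bP (is_projmx_pmx h)
  (overA_amx a) (overA_amx b) ab ah hb.
rewrite (overA_amxP CA) in CP aC Cb hC.
exists (C ord0 ord0).1; split; [exact/is_projmx_amx | exact/projmx_le_amx | exact/projmx_le_amx |].
by apply/K0eqA_mvnA => //; apply/is_projmx_amx.
Qed.

End K0.

(** * Increasing sequences of projections *)

Section Sequences.
Variables (R : realType) (A : CstarAlg R).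

Definition proj_chain (q : nat -> A) (lo hi : nat) : Prop :=
  forall k, (lo <= k)%N -> (k < hi)%N -> proj_le (q k) (q k.+1).

Definition realizes (g : nat -> projA A) (q : nat -> A) (lo hi : nat) : Prop :=
  forall k, (lo < k <= hi)%N -> is_proj (q k) /\ K0eqA (g k) (q k).

Definition splice (q r : nat -> A) (j : nat) (k : nat) : A := if (k <= j)%N then q k else r k.

Lemma proj_chain_splice q r lo j hi :
  proj_chain q lo j -> proj_le (q j) (r j.+1) -> proj_chain r j.+1 hi ->
  proj_chain (splice q r j) lo hi.
Proof.
move=> qc qr rc k lok khi; rewrite /splice.
by case: (ltngtP k j) => [kj | jk | ->] /=; [apply: qc | apply: rc | ].
Qed.

Lemma realizes_splice g q r lo j hi :
  realizes g q lo j -> realizes g r j hi -> realizes g (splice q r j) lo hi.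
Proof.
by move=> qg rg k kb; rewrite /splice; case: leqP => kj; [apply: qg | apply: rg]; lia.
Qed.

Hypothesis canc : has_cancellation A.

Lemma realizes_between (g : nat -> projA A) (a : A) lo hi :
  is_proj a -> K0le_mx (amx a) (pmx (g lo.+1)) ->
  (forall k, (lo < k < hi)%N -> K0le (g k) (g k.+1)) -> (lo < hi)%N ->
  forall b, is_proj b -> proj_le a b -> K0eqA (g hi) b ->
  exists q, [/\ realizes g q lo hi, proj_chain q lo.+1 hi, proj_le a (q lo.+1) & q hi = b].
Proof.
move=> aP ag; elim: hi => // hi IH gle; rewrite ltnS leq_eqVlt => /orP[/eqP <- | lohi] b bP ab gb.
  exists (fun _ => b); split=> // [k kb | k lok klo]; last by exfalso; lia.
  by have -> : k = lo.+1 by lia.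
have gle' k : (lo < k < hi)%N -> K0le (g k) (g k.+1) by move=> kb; apply: gle; lia.
have ah : K0le_mx (amx a) (pmx (g hi)).
  by apply: (K0le_amx_chain canc aP ag) => [k kb | ]; [apply: gle' | ]; lia.
have hb := K0le_pmx_amx canc bP (gle hi ltac:(lia)) gb.
have [c [cP ac cb hc]] := proj_interpolate canc aP bP ab ah hb.
have [q [qg qc aq qhi]] := IH gle' lohi c cP ac hc.
exists (splice q (fun _ => b) hi); split.
- by apply: (realizes_splice qg) => k kb; have -> : k = hi.+1 by lia.
- by apply: (proj_chain_splice qc) => [|k hik khi]; rewrite ?qhi //; lia.
- by rewrite /splice lohi.
- by rewrite /splice ltnn.
Qed.

(* The anchors are extended by p 0 = 0 and m 0 = 0, so that the first gap
   (0, m 1] is filled like all the others. *)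
Lemma realizes_through (g : nat -> projA A) (p : nat -> A) (m : nat -> nat) N :
  p 0%N = 0 -> m 0%N = 0%N ->
  (forall n, (n <= N)%N -> is_proj (p n)) ->
  (forall n, (n < N)%N -> proj_le (p n) (p n.+1)) ->
  (forall n, (n < N)%N -> (m n < m n.+1)%N) ->
  (forall k, (0 < k < m N)%N -> K0le (g k) (g k.+1)) ->
  (forall n, (0 < n <= N)%N -> K0eqA (g (m n)) (p n)) ->
  exists q, [/\ realizes g q 0 (m N), proj_chain q 1 (m N) & forall n, (n <= N)%N -> q (m n) = p n].
Proof.
move=> p0 m0; elim: N => [|N IH] pP ple mlt gle gp.
  exists (fun _ => p 0%N); rewrite m0; split=> [k kN | k k1 kN | n]; try by exfalso; lia.
  by rewrite leqn0 => /eqP ->.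
have mmono : {in [pred n | n <= N.+1]%N &, {homo m : i j / i <= j}}%N.
  apply: homo_leq_in => //; first exact: leq_trans.
    by move=> i j iN jN k ikj; rewrite !inE /= in iN jN *; lia.
  by move=> n /= _ nN; apply/ltnW/mlt.
have mN := mlt N (ltnSn N).
have [q [qg qc qp]] := IH (fun n nN => pP n (leqW nN)) (fun n nN => ple n (ltnW nN))
  (fun n nN => mlt n (ltnW nN)) (fun k kN => gle k ltac:(lia)) (fun n nN => gp n ltac:(lia)).
have pg : K0le_mx (amx (p N)) (pmx (g (m N).+1)).
  case: N {IH qg qc qp mmono ple} pP mlt gle gp mN => [|N] pP mlt gle gp mN.
    by rewrite p0; apply: K0le_mx_amx0.
  have mN' := mlt N (ltnW (ltnSn N)).
  exact: (K0le_amx_pmx canc (pP _ (leqnSn _)) (gp N.+1 ltac:(lia)) (gle (m N.+1) ltac:(lia))).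
have gle' k : (m N < k < m N.+1)%N -> K0le (g k) (g k.+1) by move=> kb; apply: gle; lia.
have gpN : K0eqA (g (m N.+1)) (p N.+1) by apply: gp; lia.
have [r [rg rc pr rN]] :=
  realizes_between (pP _ (leqnSn _)) pg gle' mN (pP _ (leqnn _)) (ple _ (ltnSn _)) gpN.
exists (splice q r (m N)); split.
- exact: realizes_splice qg rg.
- by apply: (proj_chain_splice qc _ rc); rewrite qp.
- move=> n; rewrite leq_eqVlt ltnS => /orP[/eqP -> | nN]; first by rewrite /splice leqNgt mN.
  by rewrite /splice mmono ?inE ?leqnSn ?(leqW nN) // qp.
Qed.

End Sequences.

Theorem lemma2p3 (R : realType) (A : CstarAlg R) :
  has_cancellation A ->
  (* (1) *)
  (forall (p : A) (N : nat) (g : nat -> projA A),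
      is_proj p -> (1 <= N)%N ->
      (forall n, (1 <= n)%N -> (n < N)%N -> K0le (g n) (g n.+1)) ->
      K0eqA (g N) p ->
      exists pp : nat -> A,
        (forall n, (1 <= n <= N)%N -> is_proj (pp n)) /\
        (forall n, (1 <= n)%N -> (n < N)%N -> proj_le (pp n) (pp n.+1)) /\
        (forall n, (1 <= n <= N)%N -> K0eqA (g n) (pp n)) /\
        pp N = p) /\
  (* (2) *)
  (forall (N M : nat) (p : nat -> A) (g : nat -> projA A) (m : nat -> nat),
      (1 <= N)%N ->
      (forall n, (1 <= n <= N)%N -> is_proj (p n)) ->
      (forall n, (1 <= n)%N -> (n < N)%N -> proj_le (p n) (p n.+1)) ->
      (forall k, (1 <= k)%N -> (k < M)%N -> K0le (g k) (g k.+1)) ->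
      (forall n, (1 <= n <= N)%N -> (1 <= m n <= M)%N) ->
      (forall n, (1 <= n)%N -> (n < N)%N -> (m n < m n.+1)%N) ->
      (forall n, (1 <= n <= N)%N -> K0eqA (g (m n)) (p n)) ->
      m N = M ->
      exists q : nat -> A,
        (forall k, (1 <= k <= M)%N -> is_proj (q k)) /\
        (forall k, (1 <= k)%N -> (k < M)%N -> proj_le (q k) (q k.+1)) /\
        (forall k, (1 <= k <= M)%N -> K0eqA (g k) (q k)) /\
        (forall n, (1 <= n <= N)%N -> p n = q (m n))).
Proof.
move=> canc; split.
  move=> p N g pP N1 gle gp.
  have gle' k : (0 < k < N)%N -> K0le (g k) (g k.+1) by case/andP; apply: gle.
  have [q [qg qc _ qN]] := @realizes_between _ _ canc g 0 0%N N (is_proj0 A)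
    (K0le_mx_amx0 _) gle' N1 p pP (proj_le0 p) gp.
  by exists q; split; [move=> n /qg[] | split; [exact: qc | split=> // n /qg[]]].
move=> [//|N] M p g m _ pP ple gle mM mlt gp mN.
pose p' n := if n is 0%N then 0 else p n; pose m' n := if n is 0%N then 0%N else m n.
have [q [qg qc qp]] : exists q, [/\ realizes g q 0 (m' N.+1), proj_chain q 1 (m' N.+1)
    & forall n, (n <= N.+1)%N -> q (m' n) = p' n].
  apply: (realizes_through canc) => // [[|n] nN | [|n] nN | [|n] nN | k kN | [|n] nN] //.
  - exact: is_proj0.
  - exact: pP.
  - exact: proj_le0.
  - exact: ple.
  - by case/andP: (mM 1%N ltac:(lia)).
  - exact: mlt.
  - by rewrite /m' mN in kN; case/andP: kN; apply: gle.
  - exact: gp.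
rewrite /m' mN in qg qc.
exists q; split; [by move=> k /qg[] | split; [exact: qc | split]].
- by move=> k /qg[].
- by move=> [//|n] /andP[_ nN]; rewrite (qp n.+1).
Qed.
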